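(* Let $p$ be an odd prime and let $X$ be a finite family of $4p-3$ lattice points in $\mathbb{Z}^2$ (repetitions allowed). If $(p,X)=0$, then $(p-1,X)\equiv(3p-1,X) \pmod p$.
   Context: For a finite family $X$ of lattice points in $\mathbb{Z}^2$ (points may repeat; subsets are subfamilies, i.e. subsets of the index set) and an integer $n\ge 0$, $(n,X)$ denotes the number of $n$-element subfamilies of $X$ whose coordinatewise sum is congruent to $(0,0)$ modulo $p$. *)

From mathcomp Require Import all_boot all_order all_algebra.
Set Implicit Arguments. Unset Strict Implicit. Unset Printing Implicit Defensive.
Import GRing.Theory Num.Theory.
Local Open Scope ring_scope.

(* A finite family of N lattice points in Z^2 is X : 'I_N -> int * int
   (repetitions allowed). Subfamilies are subsets of the index set 'I_N.
   count_zs p n X = (n, X) : the number of n-element subfamilies whose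
   coordinatewise sum is congruent to (0,0) modulo p. *)
Definition count_zs (p n N : nat) (X : 'I_N -> int * int) : nat :=
  #|[set S : {set 'I_N} | (#|S| == n)%N
       && ((p%:Z %| \sum_(i in S) (X i).1)%Z
       && (p%:Z %| \sum_(i in S) (X i).2)%Z)]|.

From mathcomp Require Import all_boot all_order all_algebra.
From mathcomp Require Import finfield zify.
Set Implicit Arguments. Unset Strict Implicit. Unset Printing Implicit Defensive.
Import GRing.Theory Num.Theory.
Local Open Scope ring_scope.

(* Polynomial method over F_p.  By Fermat, the indicator of "S is a zero-sum
   family and p divides |S|" is (1 - a_S^(p-1)) (1 - b_S^(p-1)) (1 - |S|^(p-1)),
   where a_S and b_S are the coordinate sums of S; as a function of S this is a
   polynomial of degree at most 3(p-1) in the indicator vector of S, so its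
   alternating sum over the subsets of any Y with |Y| > 3(p-1) vanishes.  If
   moreover |Y| < 3p and Y has no zero-sum p-subset, only the empty set and the
   zero-sum 2p-subsets contribute: Y has -1 zero-sum 2p-subsets modulo p.
   Removing S from Y matches, for a zero-sum Y of size 3p-1, its zero-sum
   (p-1)-subsets with its zero-sum 2p-subsets, and, for a zero-sum S of size
   p-1, the zero-sum (3p-1)-supersets of S with the zero-sum 2p-subsets of its
   complement (of size 3p-2).  Counting the pairs S <= Y in both ways gives
   -(3p-1, X) = -(p-1, X) modulo p. *)

Section SetFunctionDegree.
Variables (R : comPzRingType) (I : finType).
Implicit Types (S T Y : {set I}) (f g : {set I} -> R).

Lemma alt_sum_supset_eq0 Y T : (#|T| < #|Y|)%N ->
  \sum_(S : {set I} | S \subset Y) (-1) ^+ #|S| * (T \subset S)%:R = 0 :> R.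
Proof.
(* Adding or removing an element j of Y :\: T is a sign-reversing involution. *)
move=> ltTY; have /set0Pn [j]: Y :\: T != set0.
  by rewrite setD_eq0; apply: contraTN ltTY => /subset_leq_card; rewrite leqNgt.
rewrite inE => /andP [jNT jY].
pose F S : R := (-1) ^+ #|S| * (T \subset S)%:R.
have FU1 S : j \notin S -> F (j |: S) = - F S.
  move=> jNS; rewrite /F cardsU1 jNS exprS mulN1r mulNr.
  by congr (- (_ * _%:R)); rewrite -{2}(setU1K jNS) subsetD1 jNT andbT.
rewrite (bigID (fun S => j \in S)) /=.
rewrite (reindex_onto (fun S => j |: S) (fun S => S :\ j)) /=; last first.
  by move=> S /andP [_ jS]; rewrite setD1K.
rewrite (eq_bigl (fun S => (S \subset Y) && (j \notin S))) => [|S]; last first.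
  rewrite subUset sub1set jY setU11 /= andbT; congr (_ && _).
  have [jS|jNS] := boolP (j \in S); last by rewrite setU1K ?eqxx.
  by apply/negbTE; apply: contraTneq jS => <-; rewrite setD11.
by rewrite (eq_bigr (fun S => - F S)) => [|S /andP [_ /FU1] //]; rewrite sumrN addNr.
Qed.

(* f is a polynomial of degree at most d in the indicator vector of S: an
   R-linear combination of the monomials S |-> [T \subset S] with #|T| <= d. *)
Definition deg_le (d : nat) f :=
  exists2 s : seq (R * {set I}), all (fun aT : R * {set I} => #|aT.2| <= d)%N s &
    forall S : {set I}, f S = \sum_(aT <- s) aT.1 * (aT.2 \subset S)%:R.

Lemma alt_sum_deg_le_eq0 d f Y : deg_le d f -> (d < #|Y|)%N ->
  \sum_(S : {set I} | S \subset Y) (-1) ^+ #|S| * f S = 0.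
Proof.
move=> [s /allP s_d fE] ltdY.
under eq_bigr do rewrite fE mulr_sumr.
rewrite exchange_big big1_seq // => aT /s_d le_aT_d /=.
under eq_bigr do rewrite mulrCA.
by rewrite -mulr_sumr alt_sum_supset_eq0 ?mulr0 // (leq_ltn_trans le_aT_d).
Qed.

Lemma eq_deg_le d f g : f =1 g -> deg_le d f -> deg_le d g.
Proof. by move=> fg [s s_d fE]; exists s => // S; rewrite -fg. Qed.

Lemma deg_le_leq d e f : (d <= e)%N -> deg_le d f -> deg_le e f.
Proof.
move=> le_de [s s_d fE]; exists s => //.
by apply: sub_all s_d => aT /leq_trans; apply.
Qed.

Lemma deg_le_cst a : deg_le 0 (fun _ => a).
Proof. by exists [:: (a, set0)]; rewrite /= ?cards0 // => S; rewrite big_seq1 sub0set mulr1. Qed.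

Lemma deg_le_sum c : deg_le 1 (fun S => \sum_(i in S) c i).
Proof.
exists [seq (c i, [set i]) | i <- enum I].
  by apply/allP => _ /mapP [i _ ->]; rewrite cards1.
move=> S; rewrite big_map big_enum big_mkcond /=.
by apply: eq_bigr => i _; rewrite sub1set; case: (i \in S); rewrite ?mulr1 ?mulr0.
Qed.

Lemma deg_leD d f g : deg_le d f -> deg_le d g -> deg_le d (fun S => f S + g S).
Proof.
move=> [s s_d fE] [t t_d gE]; exists (s ++ t); first by rewrite all_cat s_d.
by move=> S; rewrite big_cat fE gE.
Qed.

Lemma deg_leN d f : deg_le d f -> deg_le d (fun S => - f S).
Proof.
move=> [s s_d fE]; exists [seq (- aT.1, aT.2) | aT <- s]; first by rewrite all_map.
by move=> S; rewrite big_map fE -sumrN; apply: eq_bigr => aT _; rewrite mulNr.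
Qed.

Lemma deg_leB d f g : deg_le d f -> deg_le d g -> deg_le d (fun S => f S - g S).
Proof. by move=> df /deg_leN; apply: deg_leD. Qed.

Lemma deg_leM d e f g : deg_le d f -> deg_le e g -> deg_le (d + e) (fun S => f S * g S).
Proof.
move=> [s s_d fE] [t t_e gE].
exists [seq (aT.1 * bU.1, aT.2 :|: bU.2) | aT <- s, bU <- t].
  apply/all_allpairsP => aT bU /(allP s_d) le_aT /(allP t_e) le_bU /=.
  by rewrite (leq_trans (leq_card_setU _ _)) ?leq_add.
move=> S; rewrite fE gE big_allpairs_dep mulr_suml; apply: eq_bigr => aT _.
rewrite mulr_sumr; apply: eq_bigr => bU _.
by rewrite subUset -mulnb natrM mulrACA.
Qed.

Lemma deg_leX d f n : deg_le d f -> deg_le (d * n) (fun S => f S ^+ n).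
Proof.
move=> df; elim: n => [|n IHn].
  by rewrite muln0; apply: eq_deg_le (deg_le_cst 1) => S; rewrite expr0.
by rewrite mulnS; apply: eq_deg_le (deg_leM df IHn) => S; rewrite exprS.
Qed.

End SetFunctionDegree.

Lemma card_in_bij (T U : finType) (A : {set T}) (B : {set U}) (f : T -> U) (g : U -> T) :
  {in A, forall x, f x \in B} -> {in B, forall y, g y \in A} ->
  {in A, cancel f g} -> {in B, cancel g f} -> #|A| = #|B|.
Proof.
move=> fAB gBA fK gK; rewrite -(card_in_imset (can_in_inj fK)).
apply: eq_card => y; apply/imsetP/idP => [[x xA ->]|yB]; first exact: fAB.
by exists (g y); rewrite ?gK ?gBA.
Qed.

Lemma double_count_card (T U : finType) (A : {set T}) (B : {set U}) (r : T -> U -> bool) :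
  \sum_(x in A) #|[set y in B | r x y]| = \sum_(y in B) #|[set x in A | r x y]|.
Proof.
transitivity (\sum_(x in A) \sum_(y in B | r x y) 1)%N.
  by apply: eq_bigr => x _; rewrite -sum1_card; apply: eq_bigl => y; rewrite inE.
rewrite (exchange_big_dep (mem B)) /= => [|x y _ /andP [] //].
by apply: eq_bigr => y yB; rewrite -sum1_card; apply: eq_bigl => x; rewrite !inE yB.
Qed.

Lemma finField_eq0_indicator (F : finFieldType) (x : F) :
  1 - x ^+ #|F|.-1 = (x == 0)%:R.
Proof.
have [->|nz_x] := eqVneq x 0.
  by rewrite expr0n; move: (finNzRing_gt1 F); case: #|F| => [|[|n]] //; rewrite subr0.
apply/eqP; rewrite subr_eq0 eq_sym; apply/eqP; apply: (mulfI nz_x).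
by rewrite -exprS prednK ?expf_card ?mulr1 // ltnW // finNzRing_gt1.
Qed.

Lemma Fp_nat_eq_mod (p m n : nat) : prime p -> (m%:R = n%:R :> 'F_p) -> m = n %[mod p].
Proof. by move=> hp mn; rewrite -!(val_Fp_nat hp) mn. Qed.

Lemma setDDK (T : finType) (A B : {set T}) : B \subset A -> A :\: (A :\: B) = B.
Proof. by move=> sBA; rewrite setDDr setDv set0U (setIidPr sBA). Qed.

Section ZeroSums.
Variables (p : nat) (I : finType) (X : I -> int * int).
Implicit Types (S T Y : {set I}).

Definition zero_sum S : bool :=
  (p%:Z %| \sum_(i in S) (X i).1)%Z && (p%:Z %| \sum_(i in S) (X i).2)%Z.

Definition zero_sum_subsets (n : nat) Y : {set {set I}} :=
  [set S : {set I} | [&& S \subset Y, #|S| == n & zero_sum S]].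

Lemma zero_sum0 : zero_sum set0.
Proof. by rewrite /zero_sum !big_set0 !dvdz0. Qed.

Lemma zero_sum_setD S Y : S \subset Y -> zero_sum S -> zero_sum (Y :\: S) = zero_sum Y.
Proof.
move=> sSY; have sumY (c : I -> int) :
    \sum_(i in Y) c i = \sum_(i in S) c i + \sum_(i in Y :\: S) c i.
  by rewrite (big_setID S) (setIidPr sSY).
by rewrite /zero_sum !sumY => /andP [zS1 zS2]; rewrite !rpredDl.
Qed.

Lemma zero_sum_setDr S Y : S \subset Y -> zero_sum Y -> zero_sum (Y :\: S) = zero_sum S.
Proof.
move=> sSY zY; apply/idP/idP => [zYS|zS]; last by rewrite zero_sum_setD.
by rewrite -(zero_sum_setD (subsetDl Y S) zYS) setDDK in zY.
Qed.

Lemma card_zero_sum_subsetsC m n Y : zero_sum Y -> (m + n)%N = #|Y| ->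
  #|zero_sum_subsets m Y| = #|zero_sum_subsets n Y|.
Proof.
move=> zY cardY.
have compl m' n' S : (m' + n')%N = #|Y| -> S \in zero_sum_subsets m' Y ->
    Y :\: S \in zero_sum_subsets n' Y.
  move=> cardY' /[!inE] /and3P [sSY /eqP cS zS].
  by rewrite subsetDl cardsDS // cS -cardY' addKn eqxx zero_sum_setDr.
have DDK S : S \in zero_sum_subsets _ Y -> Y :\: (Y :\: S) = S.
  by rewrite inE => /andP [sSY _]; rewrite setDDK.
apply: (card_in_bij (f := setD Y) (g := setD Y)) => S.
- exact: compl.
- by apply: compl; rewrite addnC.
- exact: DDK.
- exact: DDK.
Qed.

Lemma card_zero_sum_supsets m n S : zero_sum S -> (#|S| + n)%N = m ->
  #|[set Y in zero_sum_subsets m setT | S \subset Y]| = #|zero_sum_subsets n (~: S)|.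
Proof.
move=> zS cardS.
have disjS T : T \in zero_sum_subsets n (~: S) -> [disjoint T & S].
  by rewrite inE subsets_disjoint setCK => /andP [].
have UDK T : [disjoint T & S] -> (T :|: S) :\: S = T.
  by move=> dTS; rewrite setDUl setDv setU0; apply/setDidPl.
apply: (card_in_bij (f := fun Y => Y :\: S) (g := fun T => T :|: S)) => [Y|T|Y|T].
- rewrite !inE => /andP [/and3P [_ /eqP cY zY] sSY].
  by rewrite subsetDr cardsDS // cY -cardS addKn eqxx zero_sum_setD.
- move=> Tn; have dTS := disjS T Tn; move: Tn; rewrite !inE => /and3P [_ /eqP cT zT].
  have sS_TS : S \subset T :|: S := subsetUr T S.
  rewrite subsetT sS_TS -(zero_sum_setD sS_TS zS) UDK // zT /= andbT.
  by rewrite cardsU disjoint_setI0 // cards0 subn0 cT addnC cardS eqxx.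
- rewrite !inE => /andP [_ sSY].
  by rewrite setDE setUIl [~: S :|: S]setUC setUCr setIT (setUidPl sSY).
- by move/disjS/UDK.
Qed.

End ZeroSums.

Section PrimeModulus.
Variables (p : nat) (I : finType) (X : I -> int * int).
Hypothesis hp : prime p.
Implicit Types S Y : {set I}.
Local Notation zero_sum := (zero_sum p X).
Local Notation zero_sum_subsets := (zero_sum_subsets p X).

Lemma alt_sum_zero_sum_eq0 Y : (3 * p.-1 < #|Y|)%N ->
  \sum_(S : {set I} | S \subset Y) (-1) ^+ #|S| * ((zero_sum S && (p %| #|S|)%N)%:R : 'F_p) = 0.
Proof.
move=> ltY; apply: (alt_sum_deg_le_eq0 (d := p.-1 + p.-1 + p.-1)); last by lia.
pose fermat (c : I -> int) (S : {set I}) : 'F_p := 1 - (\sum_(i in S) (c i)%:~R) ^+ p.-1.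
have deg_fermat c : deg_le p.-1 (fermat c).
  apply: deg_leB; first exact: deg_le_leq (deg_le_cst _ _).
  by have := deg_leX p.-1 (deg_le_sum (fun i => (c i)%:~R)); rewrite mul1n.
have fermatE c S : fermat c S = ((p%:Z %| \sum_(i in S) c i)%Z)%:R.
  rewrite /fermat -rmorph_sum (dvdz_pcharf (pchar_Fp hp)).
  by have := finField_eq0_indicator ((\sum_(i in S) c i)%:~R : 'F_p); rewrite card_Fp.
have deg_ab := deg_leM (deg_fermat (fun i => (X i).1)) (deg_fermat (fun i => (X i).2)).
apply: eq_deg_le (deg_leM deg_ab (deg_fermat (fun=> 1))) => S.
by rewrite !fermatE sumr_const natz -!natrM !mulnb.
Qed.

Lemma card_zero_sum_2p_subsets Y : (3 * p.-1 < #|Y| < 3 * p)%N ->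
  (forall S, S \subset Y -> #|S| = p -> ~~ zero_sum S) ->
  (#|zero_sum_subsets (2 * p) Y|%:R : 'F_p) = -1.
Proof.
move=> /andP [ltY Ylt] noP; set B := zero_sum_subsets _ Y.
have p_gt0 := prime_gt0 hp.
have summandE S : S \subset Y -> (-1) ^+ #|S| * ((zero_sum S && (p %| #|S|)%N)%:R : 'F_p)
    = (S == set0)%:R + (S \in B)%:R.
  move=> sSY; rewrite inE sSY -cards_eq0 /=.
  have [/dvdnP [k cS] | ndvd] := boolP (p %| #|S|)%N; last first.
    have cardSN n : (p %| n)%N -> (#|S| == n) = false.
      by move=> dvd_pn; apply: contraNF ndvd => /eqP ->.
    by rewrite andbF mulr0 (cardSN 0) ?dvdn0 // (cardSN (2 * p)) ?dvdn_mull //= addr0.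
  have: (k < 3)%N by rewrite -(ltn_pmul2r p_gt0) -cS (leq_ltn_trans (subset_leq_card sSY)).
  have [p_neq0 p_neq2p] : (p == 0)%N = false /\ (p == 2 * p)%N = false by split; lia.
  case: k cS => [|[|[|//]]] cS _; rewrite ?mul1n in cS; rewrite cS andbT.
  - by rewrite (cards0_eq cS) zero_sum0 mul0n eq_sym muln_eq0 p_neq0 mulr1 addr0.
  - by rewrite (negbTE (noP S sSY cS)) mulr0 p_neq0 p_neq2p addr0.
  - by rewrite exprM sqrrN !expr1n mul1r eqxx muln_eq0 p_neq0 add0r.
have sum_set0 : \sum_(S : {set I} | S \subset Y) (S == set0)%:R = 1 :> 'F_p.
  by rewrite (bigD1 set0) ?sub0set //= eqxx big1 ?addr0 // => S /andP [_ /negbTE ->].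
have sumB : \sum_(S : {set I} | S \subset Y) (S \in B)%:R = #|B|%:R :> 'F_p.
  rewrite (bigID (fun S => S \in B)) /= [X in _ + X]big1 ?addr0 => [|S /andP [_ /negbTE ->] //].
  rewrite (eq_bigl (fun S => S \in B)) => [|S]; last by apply/andb_idl; rewrite inE => /and3P [].
  by rewrite (eq_bigr (fun _ => 1)) ?sumr_const // => S ->.
have := alt_sum_zero_sum_eq0 ltY.
rewrite (eq_bigr _ summandE) big_split /= sum_set0 sumB addrC.
by move=> /eqP; rewrite addr_eq0 => /eqP.
Qed.

End PrimeModulus.

Lemma count_zsE (p n N : nat) (X : 'I_N -> int * int) :
  count_zs p n X = #|zero_sum_subsets p X n setT|.
Proof. by apply: eq_card => S; rewrite !inE subsetT. Qed.

Theorem mainTheorem6 (p : nat) (hp : prime p) (hodd : odd p)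
  (X : 'I_(4 * p - 3) -> int * int) :
  count_zs p p X = 0%N ->
  count_zs p (p - 1) X = count_zs p (3 * p - 1) X %[mod p].
Proof.
(* The argument does not use that p is odd. *)
move=> no_p_sum; have p_gt1 := prime_gt1 hp.
have noP (S : {set 'I_(4 * p - 3)}) : #|S| = p -> ~~ zero_sum p X S.
  move=> cS; apply: contra_eqN no_p_sum => zS; rewrite count_zsE cards_eq0.
  by apply/set0Pn; exists S; rewrite inE subsetT cS eqxx.
rewrite !count_zsE; apply: (Fp_nat_eq_mod hp).
set A1 := zero_sum_subsets p X (p - 1) setT; set A3 := zero_sum_subsets p X (3 * p - 1) setT.
have cnt3 Y : Y \in A3 -> (#|[set S in A1 | S \subset Y]|%:R : 'F_p) = -1.
  rewrite inE => /and3P [_ /eqP cY zY].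
  have -> : [set S in A1 | S \subset Y] = zero_sum_subsets p X (p - 1) Y.
    by apply/setP => S; rewrite !inE subsetT andbC.
  rewrite (card_zero_sum_subsetsC (n := 2 * p) zY) ?cY; last by lia.
  apply: (card_zero_sum_2p_subsets hp); last by move=> S _ /noP.
  by rewrite cY; lia.
have cnt1 S : S \in A1 -> (#|[set Y in A3 | S \subset Y]|%:R : 'F_p) = -1.
  rewrite inE => /and3P [_ /eqP cS zS].
  rewrite (card_zero_sum_supsets (n := 2 * p) zS) ?cS; last by lia.
  apply: (card_zero_sum_2p_subsets hp); last by move=> T _ /noP.
  by have := cardsC S; rewrite card_ord cS; lia.
have := congr1 (fun n => n%:R : 'F_p) (double_count_card A3 A1 (fun Y S => S \subset Y)).
rewrite /= !natr_sum (eq_bigr _ cnt3) (eq_bigr _ cnt1) !sumr_const !mulNrn.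
by move/oppr_inj.
Qed.
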